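(* Two weights $\lambda=(\lambda^L,\lambda^R),\mu=(\mu^L,\mu^R)\in\Lambda_{r,s}$ are $\delta$-balanced if and only if $p\big(c(\lambda,1),\dots,c(\lambda,r+s)\big)=p\big(c(\mu,1),\dots,c(\mu,r+s)\big)$ for every $p\in S_{r,s}[x;y]$.
   Context: $r,s\ge0$, $\delta\in\mathbb C$. $\Lambda^t_{r,s}$: pairs of partitions $(\lambda^L,\lambda^R)$ with $|\lambda^L|=r-t$, $|\lambda^R|=s-t$; $\Lambda_{r,s}=\bigsqcup_{t=0}^{\min(r,s)}\Lambda^t_{r,s}$. $[\nu]$ is the Young diagram of $\nu$; the content of the box in row $a$, column $b$ is $b-a$. $\mathrm{cont}(\nu,i)$ is the content of the box containing $i$ in the row-reading standard tableau of shape $\nu$. For $\lambda\in\Lambda^t_{r,s}$: $c(\lambda,i)=\mathrm{cont}(\lambda^L,i)$ ($1\le i\le r-t$), $0$ ($r-t<i\le r+t$), $\mathrm{cont}(\lambda^R,i-r-t)+\delta$ ($r+t<i\le r+s$). $\lambda,\mu$ are $\delta$-balanced if there is a pairing of the boxes of $[\lambda^L]\setminus([\lambda^L]\cap[\mu^L])$ with those of $[\lambda^R]\setminus([\lambda^R]\cap[\mu^R])$, and a pairing of the boxes of $[\mu^L]\setminus([\lambda^L]\cap[\mu^L])$ with those of $[\mu^R]\setminus([\lambda^R]\cap[\mu^R])$, such that the contents in each pair sum to $-\delta$. $S_{r,s}[x;y]$ is the algebra of polynomials in $x_1,\dots,x_r,y_1,\dots,y_s$ symmetric in the $x$'s and separately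 in the $y$'s such that $x_r=-y_1=t$ yields a polynomial independent of $t$; evaluation at $(a_1,\dots,a_{r+s})$ sets $x_i=a_i$, $y_j=a_{r+j}$. *)

From HB Require Import structures.
From mathcomp Require Import all_boot all_order all_algebra all_fingroup.
Unset Printing Implicit Defensive.
Import Order.TTheory GRing.Theory Num.Theory.
Local Open Scope ring_scope.

Definition is_partition (l : seq nat) : bool :=
  sorted geq l && all (fun x => 0 < x)%N l.

Definition psize (l : seq nat) : nat := sumn l.

(* Boxes (row, column), 0-indexed, of the Young diagram [nu], listed in
   row-reading order (row by row, left to right). *)
Definition boxes (nu : seq nat) : seq (nat * nat) :=
  flatten [seq [seq (i, j) | j <- iota 0 (nth 0%N nu i)] | i <- iota 0 (size nu)].

(* content of a box = column - row (invariant under the 0/1-index shift). *)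
Definition content (b : nat * nat) : int := (b.2%:Z - b.1%:Z)%R.

(* cont(nu, k): content of the box containing k (1 <= k <= |nu|) in the
   row-reading standard tableau of shape nu. *)
Definition cont (nu : seq nat) (k : nat) : int :=
  content (nth (0%N, 0%N) (boxes nu) k.-1).

Definition weight := (seq nat * seq nat)%type.

Definition in_Lambda (r s : nat) (la : weight) : Prop :=
  is_partition la.1 /\ is_partition la.2 /\
  exists t : nat, (t <= minn r s)%N /\ psize la.1 = (r - t)%N /\ psize la.2 = (s - t)%N.

(* The t such that lambda in Lambda^t_{r,s}. *)
Definition wt (r : nat) (la : weight) : nat := (r - psize la.1)%N.

Definition cw {F : nzRingType} (delta : F) (r s : nat) (la : weight) (i : nat) : F :=
  let t := wt r la in
  if (i <= r - t)%N then (cont la.1 i)%:~R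
  else if (i <= r + t)%N then 0
  else (cont la.2 (i - r - t))%:~R + delta.

Definition cvec {F : nzRingType} (delta : F) (r s : nat) (la : weight)
  (i : 'I_(r + s)) : F := cw delta r s la (val i).+1.

(* A pairing (bijection) between the boxes of A and of B such that the contents
   in each pair sum to -delta: a reordering B' of B matched elementwise with A. *)
Definition content_pairing {F : nzRingType} (delta : F)
  (A B : seq (nat * nat)) : Prop :=
  exists B' : seq (nat * nat), perm_eq B' B /\
    all2 (fun a b => (content a)%:~R + (content b)%:~R == - delta) A B'.

Definition boxdiff (X Y : seq nat) : seq (nat * nat) :=
  [seq b <- boxes X | b \notin boxes Y].

Definition balanced {F : nzRingType} (delta : F) (la mu : weight) : Prop :=
  content_pairing delta (boxdiff la.1 mu.1) (boxdiff la.2 mu.2) /\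
  content_pairing delta (boxdiff mu.1 la.1) (boxdiff mu.2 la.2).

(* Variables are indexed by 'I_(r+s): index i < r is x_(i+1),
   index r + j is y_(j+1).  A polynomial is a finite formal sum of terms
   (coefficient, exponent vector); its coefficients are read off by coefm,
   so two representations denote the same polynomial iff coefm agrees. *)

Definition mono (n : nat) := {ffun 'I_n -> nat}.
Definition mpoly (F : nzRingType) (n : nat) := seq (F * mono n).

Definition coefm {F : nzRingType} {n : nat} (p : mpoly F n) (m : mono n) : F :=
  \sum_(u <- p | u.2 == m) u.1.

Definition meval {F : nzRingType} {n : nat} (p : mpoly F n) (a : 'I_n -> F) : F :=
  \sum_(u <- p) u.1 * \prod_(i < n) a i ^+ u.2 i.

Definition sym_xy {F : nzRingType} (r s : nat) (p : mpoly F (r + s)) : Prop :=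
  forall sigma : 'S_(r + s), (forall i, (val (sigma i) < r)%N = (val i < r)%N) ->
  forall m : mono (r + s), coefm p [ffun i => m (sigma i)] = coefm p m.

Definition expo_at {n : nat} (k : nat) (m : mono n) : nat :=
  (\sum_(j < n | val j == k) m j)%N.

(* substitution x_r = t, y_1 = -t (for r, s > 0); the new variable t is put
   in the slot of x_r (index r-1), the slot of y_1 (index r) becomes unused:
   x_r^a y_1^b  |->  (-1)^b t^(a+b). *)
Definition subst_t {F : nzRingType} (r s : nat) (p : mpoly F (r + s)) : mpoly F (r + s) :=
  [seq ((-1) ^+ expo_at r u.2 * u.1,
        [ffun i : 'I_(r + s) => if val i == r.-1 then (u.2 i + expo_at r u.2)%N
                               else if val i == r then 0%N else u.2 i]) | u <- p].

Definition t_independent {F : nzRingType} (r s : nat) (p : mpoly F (r + s)) : Prop :=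
  forall m : mono (r + s), (0 < expo_at r.-1 m)%N -> coefm (@subst_t F r s p) m = 0.

Definition in_S {F : nzRingType} (r s : nat) (p : mpoly F (r + s)) : Prop :=
  @sym_xy F r s p /\ ((0 < r)%N -> (0 < s)%N -> @t_independent F r s p).

(* Split a point into x-coordinates a_1..a_r and y-coordinates b_1..b_s and
   compare the multisets {a_i} and {-b_j}.  When a_i = -b_j, symmetry moves the
   pair to (x_r, y_1), where membership in S_{r,s} lets both be replaced by 0;
   after all such cancellations the two multisets are determined by their formal
   difference {a_i} - {-b_j}, so p(a, b) depends only on that difference.
   Conversely, the supersymmetric power sums sum a_i^k - sum (-b_j)^k lie in
   S_{r,s}, and a polynomial separating the finitely many coordinates recovers
   the difference from them.  At c(lambda, .) the difference is the multiset of
   contents of [lambda^L] minus that of the values -(c + delta), c a content of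
   [lambda^R] (the t zeros cancel).  No content occurs both in [lambda^L] \ [mu^L]
   and in [mu^L] \ [lambda^L], so equality of these differences for lambda and mu
   is exactly the existence of the two pairings. *)

From HB Require Import structures.
From mathcomp Require Import all_boot all_order all_algebra all_fingroup.
From mathcomp Require Import ring zify.
Import Order.TTheory GRing.Theory Num.Theory.
Local Open Scope ring_scope.
Set Implicit Arguments.
Unset Strict Implicit.

Section Evaluation.
Variable R : comNzRingType.

Definition mon_eval n (a : 'I_n -> R) (m : mono n) : R := \prod_(i < n) a i ^+ m i.

Lemma meval_coefm n (p : mpoly R n) a (L : seq (mono n)) :
  uniq L -> {subset map snd p <= L} ->
  meval p a = \sum_(m <- L) coefm p m * mon_eval a m.
Proof.
move=> uL pL; rewrite /coefm.
under eq_bigr => m _ do rewrite big_distrl.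
rewrite (exchange_big_dep xpredT) //=; apply: eq_big_seq => u up.
have uL2 : u.2 \in L by apply: pL; apply: map_f.
rewrite (big_rem u.2) // eqxx [X in _ = _ + X]big1_seq ?addr0 //.
move=> m /andP [/eqP um]; rewrite -um (rem_filter u.2 uL) mem_filter.
by rewrite /= eqxx.
Qed.

Lemma meval_eq_coefm n (p q : mpoly R n) a :
  coefm p =1 coefm q -> meval p a = meval q a.
Proof.
move=> epq; set L := undup (map snd p ++ map snd q).
have uL : uniq L := undup_uniq _.
rewrite (meval_coefm a uL) ?(meval_coefm a uL); last 2 first.
- by move=> m mq; rewrite mem_undup mem_cat mq orbT.
- by move=> m mp; rewrite mem_undup mem_cat mp.
by apply: eq_bigr => m _; rewrite epq.
Qed.

Lemma eq_meval n (p : mpoly R n) a b : a =1 b -> meval p a = meval p b.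
Proof.
by move=> eab; apply: eq_bigr => u _; congr (_ * _); apply: eq_bigr => i _; rewrite eab.
Qed.

Definition xy_stable r s (sg : 'S_(r + s)) : Prop :=
  forall i, (val (sg i) < r)%N = (val i < r)%N.

Lemma meval_perm r s (p : mpoly R (r + s)) (sg : 'S_(r + s)) a :
  sym_xy r s p -> xy_stable sg -> meval p (a \o sg) = meval p a.
Proof.
move=> psym sg_st.
pose q := [seq (u.1, [ffun i => u.2 ((sg^-1)%g i)] : mono (r + s)) | u : R * mono (r + s) <- p].
have -> : meval p (a \o sg) = meval q a.
  rewrite /meval big_map; apply: eq_bigr => u _ /=; congr (_ * _).
  rewrite [RHS](reindex_inj (@perm_inj _ sg)); apply: eq_bigr => i _.
  by rewrite ffunE permK.
apply: meval_eq_coefm => m; rewrite -(psym sg sg_st m) /coefm big_map.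
apply: eq_bigl => u /=; apply/eqP/eqP => [<-|->]; apply/ffunP => j;
  by rewrite !ffunE ?permK ?permKV.
Qed.

Lemma expo_atE n k (m : mono n) (j : 'I_n) : val j = k -> expo_at k m = m j.
Proof.
move=> jk; rewrite /expo_at (big_pred1 j) // => i /=.
by rewrite -jk; apply/eqP/eqP => [/val_inj|->].
Qed.

Definition zero_pair n (a : 'I_n -> R) (k1 k2 : 'I_n) : 'I_n -> R :=
  fun i => if (i == k1) || (i == k2) then 0 else a i.

Section CancelPair.
Variables (r s : nat) (xr y1 : 'I_(r + s)).
Hypotheses (xr_val : val xr = r.-1) (y1_val : val y1 = r) (r_gt0 : (0 < r)%N).

Let y1_neq_xr : y1 != xr.
Proof. by apply/eqP => /(congr1 val); rewrite xr_val y1_val; lia. Qed.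

Lemma meval_subst_t (p : mpoly R (r + s)) c :
  meval (subst_t r s p) c = meval p (fun i => if i == y1 then - c xr else c i).
Proof.
rewrite /meval /subst_t big_map; apply: eq_bigr => u _ /=.
rewrite (expo_atE u.2 y1_val).
rewrite (bigD1 xr) //= (bigD1 y1) /= ?y1_neq_xr //.
rewrite [in RHS](bigD1 xr) //= [in RHS](bigD1 y1) /= ?y1_neq_xr //.
rewrite !ffunE xr_val y1_val !eqxx [xr == y1]eq_sym (negbTE y1_neq_xr).
have -> : (r == r.-1) = false by apply/eqP; lia.
have rest : forall i : 'I_(r + s), (i != xr) && (i != y1) ->
    (val i == r.-1) = false /\ (val i == r) = false.
  move=> i /andP [ixr iy1]; split; apply/negbTE.
    by apply: contra ixr => /eqP ie; apply/eqP/val_inj; rewrite /= ie xr_val.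
  by apply: contra iy1 => /eqP ie; apply/eqP/val_inj; rewrite /= ie y1_val.
rewrite (eq_bigr (fun i => c i ^+ u.2 i)); last first.
  by move=> i /rest [ir1 ir]; rewrite ffunE ir1 ir.
rewrite [in RHS](eq_bigr (fun i => c i ^+ u.2 i)); last first.
  by move=> i /andP [_ /negbTE ->].
rewrite exprD expr0 [(- c xr) ^+ _]exprNn.
move: (\prod_(i < r + s | _) _) => P; ring.
Qed.

Lemma meval_subst_t_xr0 (p : mpoly R (r + s)) c :
  t_independent r s p ->
  meval (subst_t r s p) c = meval (subst_t r s p) (fun i => if i == xr then 0 else c i).
Proof.
move=> p_tind; set q := subst_t r s p; set L := undup (map snd q).
have uL : uniq L := undup_uniq _.
have qL : {subset map snd q <= L} by move=> m; rewrite mem_undup.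
rewrite !(meval_coefm _ uL qL); apply: eq_bigr => m _.
have [mxr0|mxr_gt0] := posnP (m xr); last first.
  by rewrite p_tind ?mul0r // (expo_atE m xr_val).
congr (_ * _); apply: eq_bigr => i _; case: eqP => [->|//].
by rewrite mxr0 !expr0.
Qed.

Lemma meval_cancel_xr_y1 (p : mpoly R (r + s)) b :
  in_S r s p -> b y1 = - b xr -> meval p b = meval p (zero_pair b xr y1).
Proof.
move=> [_ p_tind] by1.
have s_gt0 : (0 < s)%N by have := ltn_ord y1; rewrite y1_val; lia.
rewrite (@eq_meval _ p b (fun i => if i == y1 then - b xr else b i)); last first.
  by move=> i; case: eqP => [->|].
rewrite -meval_subst_t (meval_subst_t_xr0 _ (p_tind r_gt0 s_gt0)) meval_subst_t.
apply: eq_meval => i; rewrite /zero_pair eqxx oppr0.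
by case: (i =P y1) => [->|_]; rewrite ?orbT ?orbF.
Qed.

End CancelPair.

Lemma tperm_xy_stable r s (u v : 'I_(r + s)) :
  (val u < r)%N = (val v < r)%N -> xy_stable (tperm u v).
Proof. by move=> uv i; case: tpermP => [->|->|]. Qed.

Lemma mul_xy_stable r s (s1 s2 : 'S_(r + s)) :
  xy_stable s1 -> xy_stable s2 -> xy_stable (s1 * s2)%g.
Proof. by move=> h1 h2 i; rewrite permM h2 h1. Qed.

Lemma meval_cancel r s (p : mpoly R (r + s)) a (k1 k2 : 'I_(r + s)) :
  in_S r s p -> (k1 < r)%N -> (r <= k2)%N -> a k2 = - a k1 ->
  meval p a = meval p (zero_pair a k1 k2).
Proof.
move=> pS k1x k2y ak.
have r_gt0 : (0 < r)%N by lia.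
have xr_lt : (r.-1 < r + s)%N by have := ltn_ord k2; lia.
have y1_lt : (r < r + s)%N by have := ltn_ord k2; lia.
pose xr := Ordinal xr_lt; pose y1 := Ordinal y1_lt.
have neq_ord (i j : 'I_(r + s)) : val i != val j -> i != j.
  by apply: contraNneq => ->.
have k2_xr : k2 != xr by apply: neq_ord => /=; lia.
have xr_k2 : xr != k2 by rewrite eq_sym.
have y1_xr : y1 != xr by apply: neq_ord => /=; lia.
have k1_k2 : k1 != k2 by apply: neq_ord => /=; lia.
pose sg := (tperm k1 xr * tperm k2 y1)%g.
have sg_st : xy_stable sg.
  by apply: mul_xy_stable; apply: tperm_xy_stable => /=; lia.
have sg_k1 : sg k1 = xr by rewrite permM tpermL (tpermD k2_xr y1_xr).
have sg_k2 : sg k2 = y1 by rewrite permM (tpermD k1_k2 xr_k2) tpermL.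
pose b := a \o (sg^-1)%g.
rewrite (@eq_meval _ p a (b \o sg)); last by move=> i; rewrite /b /= permK.
rewrite (meval_perm b (proj1 pS) sg_st).
rewrite (@meval_cancel_xr_y1 r s xr y1 erefl erefl r_gt0 p b pS); last first.
  by rewrite /b /= -sg_k1 -sg_k2 !permK.
rewrite -(meval_perm _ (proj1 pS) sg_st); apply: eq_meval => i.
by rewrite /zero_pair /= -sg_k1 -sg_k2 !(inj_eq perm_inj) /b /= permK.
Qed.

End Evaluation.

Lemma perm_eq_nonzero_count (T : eqType) (z : T) (s1 s2 : seq T) :
  size s1 = size s2 -> (forall v, v != z -> count_mem v s1 = count_mem v s2) ->
  perm_eq s1 s2.
Proof.
move=> size12 cnt12; apply/allP => v _ /=; apply/eqP.
have [->{v}|/cnt12//] := eqVneq v z.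
have nz_count (t : seq T) : count (predC (pred1 z)) t = size (filter (predC1 z) t).
  by rewrite size_filter.
have : perm_eq (filter (predC1 z) s1) (filter (predC1 z) s2).
  apply/allP => v _ /=; rewrite !count_filter; apply/eqP.
  have [->|vz] := eqVneq v z.
    by rewrite !(@eq_count _ _ pred0) ?count_pred0 // => w /=; rewrite andbN.
  have eq_v : predI (pred1 v) (predC1 z) =1 pred1 v.
    by move=> w /=; case: (w =P v) => // ->.
  by rewrite !(eq_count eq_v) cnt12.
move/perm_size; rewrite -!nz_count => e.
apply/eqP; rewrite -(eqn_add2r (count (predC (pred1 z)) s1)).
by rewrite count_predC e count_predC size12.
Qed.

Lemma count_mktuple (T : eqType) n (f : 'I_n -> T) (P : pred T) :
  count P [tuple f i | i < n] = (\sum_(i < n) P (f i))%N.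
Proof. by rewrite -sum1_count /= big_map big_enum_cond /= big_mkcond. Qed.

Lemma perm_eq_mktuple (T : eqType) n (f g : 'I_n -> T) :
  perm_eq [tuple f i | i < n] [tuple g i | i < n] -> exists p : 'S_n, forall i, f i = g (p i).
Proof.
case/tuple_permP => p e; exists p => i.
have := congr1 (nth (f i) ^~ i) e.
by rewrite -!(tnth_nth (f i)) !tnth_mktuple.
Qed.

Section XYPerm.
Variables (r s : nat) (p1 : 'S_r) (p2 : 'S_s).

Definition xy_perm_fun (k : 'I_(r + s)) : 'I_(r + s) :=
  unsplit (match split k with inl i => inl (p1 i) | inr j => inr (p2 j) end).

Lemma xy_perm_fun_inj : injective xy_perm_fun.
Proof.
move=> k k' /(can_inj unsplitK) e; apply: (can_inj splitK); move: e.
by case: (split k) => [i|j]; case: (split k') => [i'|j'] // [/perm_inj ->].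
Qed.

Definition xy_perm : 'S_(r + s) := perm xy_perm_fun_inj.

Lemma xy_perm_lshift i : xy_perm (lshift s i) = lshift s (p1 i).
Proof. by rewrite permE /xy_perm_fun (unsplitK (inl _)). Qed.

Lemma xy_perm_rshift j : xy_perm (rshift r j) = rshift r (p2 j).
Proof. by rewrite permE /xy_perm_fun (unsplitK (inr _)). Qed.

Lemma xy_perm_stable : xy_stable xy_perm.
Proof.
move=> k; rewrite permE /xy_perm_fun.
by case: (splitP k) => [i|j] /= _; rewrite ?ltn_ord // ltnNge leq_addr.
Qed.

End XYPerm.

Section XYDifference.
Variables (R : comNzRingType) (r s : nat).
Implicit Types a b : 'I_(r + s) -> R.

Definition xcoords a := [tuple a (lshift s i) | i < r].
Definition ycoords a := [tuple - a (rshift r j) | j < s].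

Lemma mem_xcoords a i : a (lshift s i) \in xcoords a.
Proof. by rewrite -(tnth_mktuple (fun i => a (lshift s i))) mem_tnth. Qed.

Lemma mem_ycoords a j : - a (rshift r j) \in ycoords a.
Proof. by rewrite -(tnth_mktuple (fun j => - a (rshift r j))) mem_tnth. Qed.

(* The formal differences {x_i} - {-y_j} of coordinate multisets agree; the
   counts are cross-added to stay in nat. *)
Definition same_xy_difference a b : Prop :=
  forall v, (count_mem v (xcoords a) + count_mem v (ycoords b) =
             count_mem v (xcoords b) + count_mem v (ycoords a))%N.

Definition xy_cancelled a : Prop :=
  forall i j, a (lshift s i) = - a (rshift r j) -> a (lshift s i) = 0.

Definition nonzero_count a : nat := (\sum_(k < r + s) (a k != 0%R))%N.

Lemma same_xy_difference_sym a b : same_xy_difference a b -> same_xy_difference b a.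
Proof. by move=> ab v; have := ab v; lia. Qed.

Lemma same_xy_difference_trans a b c :
  same_xy_difference a b -> same_xy_difference b c -> same_xy_difference a c.
Proof. by move=> ab bc v; have := ab v; have := bc v; lia. Qed.

Lemma lshift_neq_rshift (i : 'I_r) (j : 'I_s) : (lshift s i == rshift r j) = false.
Proof. by apply/eqP => /(congr1 val) /=; have := ltn_ord i; lia. Qed.

Lemma same_xy_difference_zero_pair a i j :
  a (rshift r j) = - a (lshift s i) ->
  same_xy_difference a (zero_pair a (lshift s i) (rshift r j)).
Proof.
move=> aij v; rewrite /xcoords /ycoords !count_mktuple.
set z := zero_pair a _ _.
have zx i' : i' != i -> z (lshift s i') = a (lshift s i').
  by move=> i'i; rewrite /z /zero_pair (inj_eq (@lshift_inj r s)) (negbTE i'i) lshift_neq_rshift.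
have zy j' : j' != j -> z (rshift r j') = a (rshift r j').
  move=> j'j; rewrite /z /zero_pair (inj_eq (@rshift_inj r s)) (negbTE j'j).
  by rewrite eq_sym lshift_neq_rshift.
rewrite (bigD1 i) //= [X in (_ + X)%N](bigD1 j) //=.
rewrite [in RHS](bigD1 i) //= [in RHS](bigD1 j) //=.
rewrite [in RHS](eq_bigr (fun i' => a (lshift s i') == v : nat)); last by move=> i' /zx ->.
rewrite [in LHS](eq_bigr (fun j' => - a (rshift r j') == v : nat)); last by move=> j' /zy ->.
by rewrite /z /zero_pair !eqxx orbT /= oppr0 aij opprK; ring.
Qed.

Lemma nonzero_count_zero_pair a k1 k2 :
  a k1 != 0 -> (nonzero_count (zero_pair a k1 k2) < nonzero_count a)%N.
Proof.
move=> ak1; rewrite /nonzero_count (bigD1 k1) //= [X in (_ < X)%N](bigD1 k1) //=.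
rewrite ak1 /zero_pair eqxx /= eqxx add0n add1n ltnS; apply: leq_sum => k _.
by case: ifP => // _; rewrite eqxx.
Qed.

Lemma xy_cancelled_count a v :
  xy_cancelled a -> v != 0 ->
  count_mem v (xcoords a) = 0%N \/ count_mem v (ycoords a) = 0%N.
Proof.
move=> a_canc v0.
have [/mapP [i _ vi]|/count_memPn] := boolP (v \in xcoords a); last by left.
have [/mapP [j _ vj]|/count_memPn] := boolP (v \in ycoords a); last by right.
by move: v0; rewrite vi (a_canc i j) ?eqxx // -vi -vj.
Qed.

Lemma perm_eq_xy_cancelled a b :
  xy_cancelled a -> xy_cancelled b -> same_xy_difference a b ->
  perm_eq (xcoords a) (xcoords b) /\ perm_eq (ycoords a) (ycoords b).
Proof.
move=> a_canc b_canc ab.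
have cnt v : v != 0 -> count_mem v (xcoords a) = count_mem v (xcoords b) /\
                       count_mem v (ycoords a) = count_mem v (ycoords b).
  move=> v0; have := ab v.
  have := xy_cancelled_count a_canc v0; have := xy_cancelled_count b_canc v0.
  set xa := count_mem v (xcoords a); set xb := count_mem v (xcoords b).
  set ya := count_mem v (ycoords a); set yb := count_mem v (ycoords b).
  by clearbody xa xb ya yb; lia.
by split; apply: (perm_eq_nonzero_count (z := 0)); rewrite ?size_tuple // => v /cnt [].
Qed.

Variable p : mpoly R (r + s).
Hypothesis pS : in_S r s p.

(* Cancel pairs x_i = -y_j <> 0 one at a time; the number of nonzero coordinates decreases. *)
Lemma exists_xy_cancelled a :
  exists2 a', meval p a = meval p a' & same_xy_difference a a' /\ xy_cancelled a'.
Proof.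
elim: {a}(nonzero_count a) {-2}a (leqnn (nonzero_count a)) => [|n IHn] a a_nz.
  exists a => //; split=> [v //|i j _]; apply/eqP; apply: contraTT a_nz => ai0.
  by rewrite -ltnNge /nonzero_count (bigD1 (lshift s i)) //= ai0.
have [/existsP [i /existsP [j /andP [/eqP aij ai0]]]|] :=
  boolP [exists i, exists j, (a (rshift r j) == - a (lshift s i)) && (a (lshift s i) != 0)].
  have [|a' ea' [da' ca']] := IHn (zero_pair a (lshift s i) (rshift r j)).
    by have := nonzero_count_zero_pair (rshift r j) ai0; lia.
  exists a'; last split=> //.
    by rewrite -ea'; apply: meval_cancel => //=; rewrite ?leq_addr.
  exact: same_xy_difference_trans (same_xy_difference_zero_pair aij) da'.
move=> a_canc; exists a => //; split=> [v //|i j aij]; apply/eqP.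
apply: contraNT a_canc => ai0; apply/existsP; exists i; apply/existsP; exists j.
by rewrite ai0 aij opprK eqxx.
Qed.

Lemma meval_xy_cancelled a b :
  xy_cancelled a -> xy_cancelled b -> same_xy_difference a b -> meval p a = meval p b.
Proof.
move=> a_canc b_canc ab.
have [/perm_eq_mktuple [p1 e1] /perm_eq_mktuple [p2 e2]] :=
  perm_eq_xy_cancelled b_canc a_canc (same_xy_difference_sym ab).
have ba k : b k = (a \o xy_perm p1 p2) k.
  rewrite -(splitK k); case: (split k) => [i|j] /=.
    by rewrite xy_perm_lshift e1.
  by rewrite xy_perm_rshift; apply: oppr_inj.
by rewrite (eq_meval p ba) meval_perm //; [exact: (proj1 pS) | exact: xy_perm_stable].
Qed.

Lemma meval_same_xy_difference a b :
  same_xy_difference a b -> meval p a = meval p b.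
Proof.
move=> ab.
have [a' ea' [aa' a'_canc]] := exists_xy_cancelled a.
have [b' eb' [bb' b'_canc]] := exists_xy_cancelled b.
rewrite ea' eb'; apply: meval_xy_cancelled => //.
exact: same_xy_difference_trans (same_xy_difference_sym aa') (same_xy_difference_trans ab bb').
Qed.

End XYDifference.

Section PowerSums.
Variables (R : comNzRingType) (r s : nat).

Definition power_sum_coef k (i : 'I_(r + s)) : R :=
  if (val i < r)%N then 1 else - (-1) ^+ k.

Definition mono_pow k (i : 'I_(r + s)) : mono (r + s) :=
  [ffun j => if j == i then k else 0%N].

Definition power_sum k : mpoly R (r + s) :=
  [seq (power_sum_coef k i, mono_pow k i) | i <- enum 'I_(r + s)].

Definition spsum (a : 'I_(r + s) -> R) k : R :=
  \sum_(i < r) a (lshift s i) ^+ k - \sum_(j < s) (- a (rshift r j)) ^+ k.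

Lemma meval_power_sum k a : meval (power_sum k) a = spsum a k.
Proof.
rewrite /meval big_map big_enum /=.
rewrite (eq_bigr (fun i => power_sum_coef k i * a i ^+ k)); last first.
  move=> i _; congr (_ * _); rewrite (bigD1 i) //= ffunE eqxx big1 ?mulr1 //.
  by move=> j /negbTE ji; rewrite ffunE ji expr0.
rewrite big_split_ord /spsum /power_sum_coef /=; congr (_ + _).
  by apply: eq_bigr => i _; rewrite ltn_ord mul1r.
rewrite -sumrN; apply: eq_bigr => j _.
by rewrite ltnNge leq_addr /= [(- a _) ^+ _]exprNn mulNr.
Qed.

Lemma coefm_power_sum k m :
  coefm (power_sum k) m = \sum_(i < r + s) (if mono_pow k i == m then power_sum_coef k i else 0).
Proof. by rewrite /coefm big_map big_enum_cond /= big_mkcond. Qed.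

Lemma mono_pow_perm k (sg : 'S_(r + s)) i (m : mono (r + s)) :
  (mono_pow k i == [ffun j => m (sg j)]) = (mono_pow k (sg i) == m).
Proof.
apply/eqP/eqP => mi; apply/ffunP => j.
  by have := congr1 (fun f : mono (r + s) => f ((sg^-1)%g j)) mi;
    rewrite !ffunE permKV (canF_eq (permKV sg)).
by have := congr1 (fun f : mono (r + s) => f (sg j)) mi; rewrite !ffunE (inj_eq perm_inj).
Qed.

Lemma power_sum_sym k : sym_xy r s (power_sum k).
Proof.
move=> sg sg_st m; rewrite !coefm_power_sum [in RHS](reindex_inj (@perm_inj _ sg)) /=.
by apply: eq_bigr => i _; rewrite mono_pow_perm /power_sum_coef sg_st.
Qed.

Section TIndependence.
Variables (xr y1 : 'I_(r + s)).
Hypotheses (xr_val : val xr = r.-1) (y1_val : val y1 = r) (r_gt0 : (0 < r)%N).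

Let y1_neq_xr : y1 != xr.
Proof. by apply/eqP => /(congr1 val); rewrite xr_val y1_val; lia. Qed.

Let xr_eq_y1F : (xr == y1) = false.
Proof. by rewrite eq_sym (negbTE y1_neq_xr). Qed.

Definition t_mono (m : mono (r + s)) : mono (r + s) :=
  [ffun i => if val i == r.-1 then (m i + expo_at r m)%N else if val i == r then 0%N else m i].

Lemma subst_tE (p : mpoly R (r + s)) :
  subst_t r s p = [seq ((-1) ^+ expo_at r u.2 * u.1, t_mono u.2) | u <- p].
Proof. by []. Qed.

Lemma expo_at_mono_pow k i : expo_at r (mono_pow k i) = if i == y1 then k else 0%N.
Proof. by rewrite (expo_atE _ y1_val) ffunE eq_sym. Qed.

Lemma t_mono_mono_pow k i :
  t_mono (mono_pow k i) = mono_pow k (if i == y1 then xr else i).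
Proof.
apply/ffunP => j; rewrite !ffunE expo_at_mono_pow.
have -> : (val j == r.-1) = (j == xr) by rewrite -(inj_eq val_inj) xr_val.
have -> : (val j == r) = (j == y1) by rewrite -(inj_eq val_inj) y1_val.
have [->|iy1] := eqVneq i y1.
  by have [->|jx] := eqVneq j xr; rewrite ?eqxx ?xr_eq_y1F //; case: (j == y1).
have [->|jx] := eqVneq j xr; first by rewrite addn0.
by have [->|jy] := eqVneq j y1; rewrite ?(negbTE jx) // eq_sym (negbTE iy1).
Qed.

(* After the substitution the monomials x_r^k and y_1^k both become t^k, with opposite signs. *)
Lemma power_sum_t_independent k : t_independent r s (power_sum k).
Proof.
move=> m; rewrite (expo_atE m xr_val) => mxr.
rewrite /coefm subst_tE -map_comp big_map big_enum_cond big_mkcond /=.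
rewrite (bigD1 xr) //= (bigD1 y1) //= big1; last first.
  move=> i /andP [ixr iy1]; rewrite t_mono_mono_pow (negbTE iy1).
  case: eqP => // mi; move: mxr; rewrite -mi ffunE eq_sym (negbTE ixr); lia.
rewrite !t_mono_mono_pow !expo_at_mono_pow eqxx xr_eq_y1F.
rewrite /power_sum_coef xr_val y1_val ltnn.
have -> : (r.-1 < r)%N by lia.
case: (_ == m); last by rewrite !addr0.
by rewrite expr0 mul1r mulrN -exprMn mulrNN mulr1 expr1n addr0 subrr.
Qed.

End TIndependence.

Lemma power_sum_in_S k : in_S r s (power_sum k).
Proof.
split=> [|r_gt0 s_gt0]; first exact: power_sum_sym.
have xr_lt : (r.-1 < r + s)%N by lia.
have y1_lt : (r < r + s)%N by lia.
exact: (@power_sum_t_independent (Ordinal xr_lt) (Ordinal y1_lt)).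
Qed.

End PowerSums.

Section SeparatingPolynomial.
Variable R : idomainType.

Definition sep_poly (V : seq R) (v : R) : {poly R} := \prod_(w <- V | w != v) ('X - w%:P).

Lemma sep_poly_neq0 V v : (sep_poly V v).[v] != 0.
Proof.
rewrite /sep_poly horner_prod prodf_seq_neq0; apply/allP => w _; apply/implyP => wv.
by rewrite hornerXsubC subr_eq0 eq_sym.
Qed.

Lemma horner_sep_poly V v z :
  z \in V -> (sep_poly V v).[z] = (z == v)%:R * (sep_poly V v).[v].
Proof.
move=> zV; have [->|zv] := eqVneq z v; first by rewrite mul1r.
by rewrite mul0r /sep_poly horner_prod (big_rem z) //= zv hornerXsubC subrr mul0r.
Qed.

End SeparatingPolynomial.

Lemma horner_sum_spsum (R : comNzRingType) r s (q : {poly R}) (a : 'I_(r + s) -> R) :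
  \sum_(i < r) q.[a (lshift s i)] - \sum_(j < s) q.[- a (rshift r j)] =
  \sum_(k < size q) q`_k * spsum a k.
Proof.
under eq_bigr => i _ do rewrite horner_coef.
under [X in _ - X]eq_bigr => j _ do rewrite horner_coef.
rewrite exchange_big [X in _ - X]exchange_big -sumrB; apply: eq_bigr => k _.
by rewrite mulrBr !mulr_sumr.
Qed.

(* Evaluating at the points of [V] the polynomial that vanishes on [V] except at [v]
   recovers the count of [v] from the supersymmetric power sums. *)
Lemma same_xy_difference_spsum (R : numDomainType) r s (a b : 'I_(r + s) -> R) :
  (forall k, spsum a k = spsum b k) -> same_xy_difference a b.
Proof.
move=> ab v.
pose V := xcoords a ++ ycoords a ++ xcoords b ++ ycoords b.
pose q := sep_poly V v; pose c := q.[v].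
have horner_q z : z \in V -> q.[z] = (z == v)%:R * c by apply: horner_sep_poly.
have count_q d : d = a \/ d = b ->
    \sum_(k < size q) q`_k * spsum d k =
    (count_mem v (xcoords d))%:R * c - (count_mem v (ycoords d))%:R * c.
  move=> dab; rewrite -horner_sum_spsum !count_mktuple !natr_sum !mulr_suml.
  congr (_ - _); apply: eq_bigr => i _; rewrite horner_q //;
    by case: dab => ->; rewrite !mem_cat ?mem_xcoords ?mem_ycoords ?orbT.
have : \sum_(k < size q) q`_k * spsum a k = \sum_(k < size q) q`_k * spsum b k.
  by apply: eq_bigr => k _; rewrite ab.
rewrite (count_q a (or_introl erefl)) (count_q b (or_intror erefl)) -!mulrBl.
move/(mulIf (sep_poly_neq0 V v))/eqP; rewrite subr_eq addrAC eq_sym subr_eq eq_sym.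
by rewrite -!natrD eqr_nat => /eqP.
Qed.

Lemma all2_eq_map (T U : eqType) (rel_fg : rel T) (f g : T -> U) (A B : seq T) :
  (forall a b, rel_fg a b = (f a == g b)) -> all2 rel_fg A B = (map f A == map g B).
Proof. by move=> fg; elim: A B => [|a A IH] [|b B] //=; rewrite eqseq_cons IH fg. Qed.

Lemma perm_eq_map_reorder (T U : eqType) (f g : T -> U) (A B : seq T) :
  perm_eq (map f A) (map g B) -> exists2 B', perm_eq B' B & map f A = map g B'.
Proof.
elim: A B => [|a A IH] B /=.
  by case: B => [|b B]; [exists [::] | rewrite perm_sym => /perm_nilP].
move=> fAB; have : f a \in map g B by rewrite -(perm_mem fAB) mem_head.
case/mapP => b bB fab.
have [|B' B'B fAB'] := IH (rem b B).
  by rewrite -(perm_cons (f a)) (perm_trans fAB) // fab -map_cons perm_map ?perm_to_rem.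
exists (b :: B'); last by rewrite /= fab fAB'.
by rewrite perm_sym (perm_trans (perm_to_rem bB)) // perm_cons perm_sym.
Qed.

Lemma sum_nat_count (T : Type) (P : pred T) (l : seq T) :
  (\sum_(x <- l) P x)%N = count P l.
Proof. by elim: l => [|x l IH]; rewrite ?big_nil ?big_cons ?IH. Qed.

Lemma count_filter_predC (T : Type) (P Q : pred T) (l : seq T) :
  count P l = (count P (filter Q l) + count P (filter (predC Q) l))%N.
Proof. by elim: l => //= x l ->; case: (Q x) => /=; case: (P x); lia. Qed.

Lemma mem_boxes (nu : seq nat) (b : nat * nat) :
  (b \in boxes nu) = (b.1 < size nu)%N && (b.2 < nth 0%N nu b.1)%N.
Proof.
case: b => i j /=; apply/flattenP/andP => [[row /mapP [i' + ->] /mapP [j' + [-> ->]]]|[iX jX]].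
  by rewrite !mem_iota !add0n => /andP [_ ->] /andP [_ ->].
by exists [seq (i, j0) | j0 <- iota 0 (nth 0%N nu i)]; apply: map_f; rewrite mem_iota.
Qed.

Lemma uniq_boxes nu : uniq (boxes nu).
Proof.
rewrite /boxes; elim: (iota 0 _) (iota_uniq 0 (size nu)) => //= i I IH /andP [iI I_uniq].
rewrite cat_uniq IH // andbT map_inj_uniq ?iota_uniq; last by move=> ? ? [].
apply/hasPn => _ /flattenP [_ /mapP [i' i'I ->] /mapP [j _ ->]].
by apply/mapP => [[j' _ [ii' _]]]; move: iI; rewrite -ii' i'I.
Qed.

Lemma size_boxes nu : size (boxes nu) = psize nu.
Proof.
rewrite /boxes size_flatten /shape -map_comp.
rewrite (eq_map (g := nth 0%N nu)); last by move=> i /=; rewrite size_map size_iota.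
by rewrite -/(mkseq _ _) mkseq_nth.
Qed.

Lemma partition_nth_le nu i i' : is_partition nu -> (i' <= i)%N -> (i < size nu)%N ->
  (nth 0%N nu i <= nth 0%N nu i')%N.
Proof.
case/andP => nu_sorted _ i'i iX.
have geq_trans : transitive geq by move=> a b c /= ba cb; apply: leq_trans cb ba.
apply: (sorted_leq_nth geq_trans leqnn 0%N nu_sorted); rewrite ?inE //; lia.
Qed.

Lemma mem_boxes_up nu i j i' j' : is_partition nu -> (i, j) \in boxes nu ->
  (i' <= i)%N -> (j' <= j)%N -> (i', j') \in boxes nu.
Proof.
move=> nu_part; rewrite !mem_boxes /= => /andP [iX jX] i'i j'j.
by have := partition_nth_le nu_part i'i iX; lia.
Qed.

(* Equal contents put two boxes on one diagonal, and a diagram containing the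
   lower of them contains the upper one too. *)
Lemma boxdiff_contentP X Y (b1 b2 : nat * nat) : is_partition X -> is_partition Y ->
  b1 \in boxdiff X Y -> b2 \in boxdiff Y X -> content b1 != content b2.
Proof.
move=> X_part Y_part; rewrite !mem_filter.
case: b1 b2 => [i1 j1] [i2 j2] /andP [/negP b1Y b1X] /andP [/negP b2X b2Y].
apply/eqP; rewrite /content /= => e.
have [i12|i21] := leqP i1 i2.
  by apply: b1Y; apply: (mem_boxes_up Y_part b2Y i12); lia.
by apply: b2X; apply: (mem_boxes_up X_part b1X (ltnW i21)); lia.
Qed.

Lemma count_boxdiff0 (U : eqType) (g : int -> U) X Y v : injective g ->
  is_partition X -> is_partition Y ->
  count (fun b => g (content b) == v) (boxdiff X Y) = 0%N \/
  count (fun b => g (content b) == v) (boxdiff Y X) = 0%N.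
Proof.
move=> g_inj X_part Y_part.
have [/hasP [b1 b1XY /eqP gb1]|] := boolP (has (fun b => g (content b) == v) (boxdiff X Y));
  last by rewrite has_count -leqNgt leqn0 => /eqP; left.
right; apply/eqP; rewrite -leqn0 leqNgt -has_count; apply/hasPn => b2 b2YX.
apply: contraNN (boxdiff_contentP X_part Y_part b1XY b2YX) => /eqP gb2.
by apply/eqP/g_inj; rewrite gb1 gb2.
Qed.

Section Weights.
Variables (R : numDomainType) (delta : R).

(* The value a box of lambda^L contributes to the x-coordinates of c(lambda, .),
   and a box of lambda^R to the negated y-coordinates. *)
Definition xcontent (b : nat * nat) : R := (content b)%:~R.
Definition ycontent (b : nat * nat) : R := - ((content b)%:~R + delta).

Lemma content_pairingP A B :
  content_pairing delta A B <->
  (forall v, count (fun b => xcontent b == v) A = count (fun b => ycontent b == v) B).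
Proof.
have pair_eq a b : ((content a)%:~R + (content b)%:~R == - delta :> R) = (xcontent a == ycontent b).
  rewrite /xcontent /ycontent; apply/eqP/eqP => [ab|->]; last by ring.
  by apply: (addIr (content b)%:~R); rewrite ab; ring.
have -> : content_pairing delta A B <-> perm_eq (map xcontent A) (map ycontent B).
  split=> [[B' [B'B]]|/perm_eq_map_reorder [B' B'B AB']].
    by rewrite (all2_eq_map _ _ pair_eq) => /eqP ->; apply: perm_map.
  by exists B'; split=> //; rewrite (all2_eq_map _ _ pair_eq) AB'.
split=> [/seq.permP AB v|AB]; first by have := AB (pred1 v); rewrite !count_map.
by apply/allP => v _; rewrite /= !count_map AB.
Qed.

Lemma wtP r s la : in_Lambda r s la ->
  [/\ (wt r la <= minn r s)%N, psize la.1 = (r - wt r la)%N & psize la.2 = (s - wt r la)%N].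
Proof.
case=> _ [_ [t [t_min [la1 la2]]]].
by have -> : wt r la = t by rewrite /wt la1; lia.
Qed.

Lemma count_xcoords_cvec r s la v : in_Lambda r s la ->
  count_mem v (xcoords (cvec delta r s la)) =
  (count (fun b => xcontent b == v) (boxes la.1) + wt r la * (0%R == v))%N.
Proof.
case/wtP; set t := wt r la => t_min la1 _.
rewrite count_mktuple /cvec /=.
rewrite -(big_mkord xpredT (fun i => (cw delta r s la i.+1 == v) : nat)).
rewrite (@big_cat_nat _ _ _ (r - t)) //=; last by lia.
congr (_ + _)%N.
  rewrite -sum_nat_count (big_nth (0%N, 0%N)) size_boxes la1.
  by apply: eq_big_nat => i /andP [_ ir]; rewrite /cw -/t ifT //; lia.
rewrite (eq_big_nat _ _ (F2 := fun=> (0%R == v) : nat)); last first.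
  move=> i /andP [ti ir]; rewrite /cw -/t ifF; last by apply/negbTE; rewrite -ltnNge; lia.
  by rewrite ifT //; lia.
by rewrite sum_nat_const_nat; congr (_ * _)%N; lia.
Qed.

Lemma count_ycoords_cvec r s la v : in_Lambda r s la ->
  count_mem v (ycoords (cvec delta r s la)) =
  (wt r la * (0%R == v) + count (fun b => ycontent b == v) (boxes la.2))%N.
Proof.
case/wtP; set t := wt r la => t_min _ la2.
rewrite count_mktuple /cvec /=.
rewrite -(big_mkord xpredT (fun j => (- cw delta r s la (r + j).+1 == v) : nat)).
rewrite (@big_cat_nat _ _ _ t) //=; last by lia.
congr (_ + _)%N.
  rewrite (eq_big_nat _ _ (F2 := fun=> (0%R == v) : nat)); last first.
    move=> i /andP [_ it]; rewrite /cw -/t ifF; last by apply/negbTE; rewrite -ltnNge; lia.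
    by rewrite ifT ?oppr0 //; lia.
  by rewrite sum_nat_const_nat; congr (_ * _)%N; lia.
rewrite -sum_nat_count (big_nth (0%N, 0%N)) size_boxes la2 -{1}(add0n t) big_addn.
apply: eq_big_nat => i /andP [_ i_lt].
rewrite /cw -/t ifF; last by apply/negbTE; rewrite -ltnNge; lia.
rewrite ifF; last by apply/negbTE; rewrite -ltnNge; lia.
by rewrite /cont /ycontent (_ : ((r + (i + t)).+1 - r - t).-1 = i) //; lia.
Qed.

End Weights.

Arguments xcontent {R}.

Lemma count_boxes_boxdiff (P : pred (nat * nat)) X Y :
  (count P (boxes X) + count P (boxdiff Y X) = count P (boxes Y) + count P (boxdiff X Y))%N.
Proof.
have common :
    count P [seq b <- boxes X | b \in boxes Y] = count P [seq b <- boxes Y | b \in boxes X].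
  apply/seq.permP; apply: uniq_perm; rewrite ?filter_uniq ?uniq_boxes // => b.
  by rewrite !mem_filter andbC.
rewrite (count_filter_predC P (mem (boxes Y)) (boxes X)).
rewrite (count_filter_predC P (mem (boxes X)) (boxes Y)) common.
by rewrite -/(boxdiff X Y) -/(boxdiff Y X) -!addnA; congr (_ + _); apply: addnC.
Qed.

Section Balanced.
Variables (R : numDomainType) (delta : R).

Lemma same_xy_difference_cvecP r s la mu : in_Lambda r s la -> in_Lambda r s mu ->
  same_xy_difference (cvec delta r s la) (cvec delta r s mu) <-> balanced delta la mu.
Proof.
move=> la_in mu_in; have [la1_part [la2_part _]] := la_in; have [mu1_part [mu2_part _]] := mu_in.
pose cx X Y v := count (fun b => xcontent b == v :> R) (boxdiff X Y).
pose cy X Y v := count (fun b => ycontent delta b == v) (boxdiff X Y).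
have diff_at v :
  (count_mem v (xcoords (cvec delta r s la)) + count_mem v (ycoords (cvec delta r s mu)) =
   count_mem v (xcoords (cvec delta r s mu)) + count_mem v (ycoords (cvec delta r s la)))%N <->
  (cx la.1 mu.1 v + cy mu.2 la.2 v = cx mu.1 la.1 v + cy la.2 mu.2 v)%N.
  rewrite !count_xcoords_cvec // !count_ycoords_cvec //.
  have := count_boxes_boxdiff (fun b => xcontent b == v :> R) la.1 mu.1.
  have := count_boxes_boxdiff (fun b => ycontent delta b == v) la.2 mu.2.
  rewrite /cx /cy; move: (wt r la * _)%N (wt r mu * _)%N => t1 t2.
  set n1 := count _ (boxes la.1); set n2 := count _ (boxes mu.1).
  set n3 := count _ (boxes la.2); set n4 := count _ (boxes mu.2).
  set d1 := count _ (boxdiff la.1 mu.1); set d2 := count _ (boxdiff mu.1 la.1).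
  set d3 := count _ (boxdiff la.2 mu.2); set d4 := count _ (boxdiff mu.2 la.2).
  by clearbody n1 n2 n3 n4 d1 d2 d3 d4; split; lia.
have disj v : (cx la.1 mu.1 v = 0 \/ cx mu.1 la.1 v = 0)%N /\
              (cy la.2 mu.2 v = 0 \/ cy mu.2 la.2 v = 0)%N.
  split; first exact: (count_boxdiff0 (g := fun c : int => c%:~R : R) _ (@intr_inj R)).
  have ycontent_inj : injective (fun c : int => - ((c%:~R : R) + delta)).
    by move=> c1 c2 /oppr_inj /addIr /intr_inj.
  exact: count_boxdiff0 ycontent_inj _ _.
rewrite /balanced !content_pairingP; split=> [ab|[h1 h2] v].
  by split=> v; have := disj v; have /diff_at := ab v; rewrite /cx /cy; lia.
by apply/diff_at; have := h1 v; have := h2 v; rewrite /cx /cy; lia.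
Qed.

End Balanced.

Theorem mainTheorem15 (F : numClosedFieldType) (delta : F) (r s : nat)
  (la mu : weight) :
  in_Lambda r s la -> in_Lambda r s mu ->
  (balanced delta la mu <->
   forall p : mpoly F (r + s), in_S r s p ->
     meval p (cvec delta r s la) = meval p (cvec delta r s mu)).
Proof.
move=> la_in mu_in; rewrite -(same_xy_difference_cvecP delta la_in mu_in); split.
  by move=> la_mu p pS; apply: meval_same_xy_difference.
move=> eval_eq; apply: same_xy_difference_spsum => k.
by rewrite -!meval_power_sum; apply/eval_eq/power_sum_in_S.
Qed.
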